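(* Let $\mathcal{F}$ satisfy the standard conditions and be closed under the minimizer operation. Then $\mathbb{R}_{\mathcal{F}}$ is a real closed field.
   Context: $\mathbb{N}=\{0,1,2,\dots\}$. $\mathcal{F}$ is a set of functions $\mathbb{N}^n\to\mathbb{N}$; it satisfies the standard conditions if it contains the zero function, the successor, all projections $P^n_i$, addition, multiplication and modified subtraction $x\dot- y=\max(x-y,0)$, and is closed under composition. For $f:\mathbb{N}^{k+1}\to\mathbb{N}$, $\mu f(x_1,\dots,x_{k+1})=\min\{j: f(x_1,\dots,x_k,j)=0\ \text{or}\ j=x_{k+1}\}$; $\mathcal{F}$ is closed under the minimizer operation if $f\in\mathcal{F}\Rightarrow\mu f\in\mathcal{F}$. An $\mathcal{F}$-sequence is $A(x)=\frac{f(x)-g(x)}{h(x)+1}$ with $f,g,h:\mathbb{N}\to\mathbb{N}$ in $\mathcal{F}$. $\alpha\in\mathbb{R}$ is $\mathcal{F}$-computable if some $\mathcal{F}$-sequence $A$ satisfies $|A(x)-\alpha|\le\frac1{x+1}$ for all $x$; $\mathbb{R}_{\mathcal{F}}$ is the set of $\mathcal{F}$-computable reals. *)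

From HB Require Import structures.
From mathcomp Require Import all_boot all_order all_algebra.
From mathcomp Require Import Rstruct.
From Stdlib Require Import Rdefinitions.
Set Implicit Arguments. Unset Strict Implicit. Unset Printing Implicit Defensive.
Import Order.TTheory GRing.Theory Num.Theory.

(* A function N^n -> N is modelled as a map ('I_n -> nat) -> nat.
   A class F of such functions (of all arities) is a predicate indexed by the arity. *)
Definition fclass := forall n : nat, (('I_n -> nat) -> nat) -> Prop.

Definition upd_last (k : nat) (x : 'I_k.+1 -> nat) (j : nat) : 'I_k.+1 -> nat :=
  fun i => if i == ord_max then j else x i.

Definition standard_conditions (F : fclass) : Prop :=
  F 1 (fun _ => 0%N) /\
  F 1 (fun x => (x ord0).+1) /\
  (forall n (i : 'I_n), F n (fun x => x i)) /\
  F 2 (fun x => (x ord0 + x ord_max)%N) /\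
  F 2 (fun x => (x ord0 * x ord_max)%N) /\
  F 2 (fun x => (x ord0 - x ord_max)%N) /\
  (forall m n (f : ('I_m -> nat) -> nat) (g : 'I_m -> ('I_n -> nat) -> nat),
         F m f -> (forall i, F n (g i)) ->
         F n (fun x => f (fun i => g i x))).

(* minimizer: mu f (x_1..x_{k+1}) = min { j | f(x_1..x_k, j) = 0 or j = x_{k+1} } *)
Definition minimizer (k : nat) (f : ('I_k.+1 -> nat) -> nat) : ('I_k.+1 -> nat) -> nat :=
  fun x => find (fun j => (f (upd_last x j) == 0%N) || (j == x ord_max))
                (iota 0 (x ord_max).+1).

Definition closed_minimizer (F : fclass) : Prop :=
  forall k (f : ('I_k.+1 -> nat) -> nat), F k.+1 f -> F k.+1 (minimizer f).

Local Open Scope ring_scope.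

Definition un (f : ('I_1 -> nat) -> nat) (x : nat) : nat := f (fun _ => x).

Definition Fseq (f g h : ('I_1 -> nat) -> nat) (x : nat) : R :=
  ((un f x)%:R - (un g x)%:R) / ((un h x)%:R + 1).

Definition F_computable (F : fclass) (alpha : R) : Prop :=
  exists f g h, [/\ F 1 f, F 1 g, F 1 h &
    forall x : nat, `|Fseq f g h x - alpha| <= 1 / (x%:R + 1)].

(* S is a subfield of R which (with the order inherited from R, its unique field
   ordering) is a real closed field in the sense of MathComp's rcfType axiom
   (Num.real_closed_axiom): intermediate value property for polynomials over S. *)
Definition real_closed_subfield (S : R -> Prop) : Prop :=
  S 0 /\ S 1 /\
  (forall a b, S a -> S b -> S (a + b)) /\
  (forall a, S a -> S (- a)) /\
  (forall a b, S a -> S b -> S (a * b)) /\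
  (forall a, S a -> a != 0 -> S a^-1) /\
  (forall (p : {poly R}) (a b : R), (forall i, S p`_i) -> S a -> S b ->
         a <= b -> p.[a] <= 0 <= p.[b] ->
         exists x, [/\ S x, a <= x <= b & root p x]).

(* The field operations are computed on F-sequences by explicit formulas on
   numerators and denominators, with precision moduli in F.  For the
   intermediate value property, a polynomial p with p(a) < 0 < p(b) has a root
   s in (a, b) of odd multiplicity k with p <= 0 just left of s and
   p(t) >= m (t - s)^k just right of it.  At precision x, approximate p on a
   rational grid of mesh h = 1/(2X), X = x + K + 1, starting left of s, and let
   the minimizer find the first grid point where the approximation exceeds the
   threshold 1/(M X^k).  Since p <= 0 left of s that point lies above s, and
   the lower bound m (t - s)^k forces a success by s + 2h. *)

From Stdlib Require Import Rdefinitions FunctionalExtensionality.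
From HB Require Import structures.
From mathcomp Require Import all_boot all_order all_algebra.
From mathcomp Require Import Rstruct polyrcf.
From mathcomp Require Import zify ring lra.
Set Implicit Arguments. Unset Strict Implicit. Unset Printing Implicit Defensive.
Import Order.TTheory GRing.Theory Num.Theory.

Local Open Scope ring_scope.

Section SignChangeRoot.
Variable T : rcfType.

Lemma horner_mulXsubC_exp (q : {poly T}) s k t :
  (q * ('X - s%:P) ^+ k).[t] = q.[t] * (t - s) ^+ k.
Proof. by rewrite hornerM horner_exp hornerXsubC. Qed.

(* Factor out a root r of maximal multiplicity m: either r is the wanted root,
   or the cofactor changes sign on (a, b) or on (r, b) and has smaller size. *)
Lemma poly_ivt_odd_root (p : {poly T}) a b : a < b -> p.[a] < 0 -> 0 < p.[b] ->
  exists s q k, [/\ a < s < b, p = q * ('X - s%:P) ^+ k, odd k & 0 < q.[s]].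
Proof.
have [n] := ubnP (size p); elim: n p a b => // n IH p a b size_p ab pa pb.
have [r] : {r | r \in `]a, b[ & root p r}.
  by apply: poly_ivtoo; [exact: ltW | nra].
rewrite in_itv /= => /andP[ar rb] rr.
have p0 : p != 0 by apply: contraTneq pa => ->; rewrite horner0 ltxx.
have [m [q /implyP/(_ p0) qr0 pE]] := multiplicity_XsubC p r.
have m0 : (0 < m)%N.
  by rewrite lt0n; apply: contraTneq rr => m0; rewrite pE m0 mulr1 /root.
have q0 : q != 0 by apply: contraTneq qr0 => ->; rewrite root0.
have size_q : (size q < n)%N.
  rewrite -ltnS (leq_trans _ size_p) // ltnS.
  rewrite pE size_mul ?expf_neq0 ?polyXsubC_eq0 // size_exp_XsubC.
  by rewrite addnS /= -{1}[size q]addn0 ltn_add2l.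
have pos_pow t : r < t -> 0 < (t - r) ^+ m by move=> ?; rewrite exprn_gt0 // subr_gt0.
have qb : 0 < q.[b] by move: pb; rewrite pE horner_mulXsubC_exp pmulr_lgt0 // pos_pow.
have [qneg|qpos] := ltrP q.[r] 0.
  have [s [q' [k [/andP[rs sb] qE ok q's]]]] := IH _ _ _ size_q rb qneg qb.
  exists s, (q' * ('X - r%:P) ^+ m), k; split => //.
  - by rewrite (lt_trans ar rs) sb.
  - by rewrite pE qE mulrAC.
  - by rewrite horner_mulXsubC_exp mulr_gt0 // pos_pow.
have {qpos} qpos : 0 < q.[r] by rewrite lt_neqAle eq_sym qr0 qpos.
case om : (odd m); first by exists r, q, m; rewrite ar rb.
have even_pow t : t != r -> 0 < (t - r) ^+ m.
  by move=> tr; rewrite exprn_even_gt0 ?om // subr_eq0 tr orbT.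
have qa : q.[a] < 0.
  move: pa; rewrite pE horner_mulXsubC_exp pmulr_llt0 // even_pow //.
  by rewrite lt_eqF.
have [s [q' [k [/andP[a_s sb] qE ok q's]]]] := IH _ _ _ size_q ab qa qb.
have sr : s != r.
  apply: contraNneq qr0 => <-; rewrite qE /root horner_mulXsubC_exp subrr.
  by rewrite expr0n eqn0Ngt odd_gt0 ?mulr0.
exists s, (q' * ('X - r%:P) ^+ m), k; split => //.
- by rewrite a_s sb.
- by rewrite pE qE mulrAC.
- by rewrite horner_mulXsubC_exp mulr_gt0 // even_pow.
Qed.

Lemma sign_change_root_bounds (p q : {poly T}) s k :
  p = q * ('X - s%:P) ^+ k -> odd k -> 0 < q.[s] ->
  exists eta m, [/\ 0 < eta, 0 < m,
    (forall t, s - eta <= t <= s -> p.[t] <= 0) &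
    (forall t, s <= t <= s + eta -> m * (t - s) ^+ k <= p.[t])].
Proof.
move=> pE ok qs; have qs2 : 0 < q.[s] / 2 by rewrite divr_gt0.
have [d d0 Hd] := poly_cont s q qs2.
have q_near t : `|t - s| < d -> q.[s] / 2 <= q.[t].
  by move=> /Hd; rewrite ltr_norml => /andP[+ _]; lra.
exists (d / 2), (q.[s] / 2); split; rewrite ?divr_gt0 //.
  move=> t /andP[st ts]; have qt : 0 < q.[t].
    by apply: lt_le_trans qs2 (q_near _ _); rewrite ler0_norm; lra.
  rewrite pE horner_mulXsubC_exp pmulr_rle0 // -[t - s]opprB exprNn.
  by rewrite -signr_odd ok mulN1r oppr_le0 exprn_ge0 // subr_ge0.
move=> t /andP[st ts]; rewrite pE horner_mulXsubC_exp.
apply: ler_wpM2r; first by rewrite exprn_ge0 // subr_ge0.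
by apply: q_near; rewrite ger0_norm; lra.
Qed.

End SignChangeRoot.

Section Approximation.
Variable T : realFieldType.
Implicit Types a b u v d : T.

Lemma approx_mul a b u v d : `|u - a| <= d -> `|v - b| <= d -> d <= 1 ->
  `|u * v - a * b| <= (`|a| + `|b| + 1) * d.
Proof.
move=> ua vb d1; have d0 : 0 <= d := le_trans (normr_ge0 _) ua.
have u_le : `|u| <= `|a| + d.
  by rewrite -[u](subrK a) (le_trans (ler_normD _ _)) // addrC lerD2l.
rewrite (_ : u * v - a * b = u * (v - b) + (u - a) * b); last by ring.
rewrite (le_trans (ler_normD _ _)) // !normrM.
have := ler_pM (normr_ge0 u) (normr_ge0 _) u_le vb.
have := ler_wpM2r (normr_ge0 b) ua; nra.
Qed.

Lemma approx_inv a u d : a != 0 -> `|u - a| <= d -> 2 * d <= `|a| ->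
  `|u^-1 - a^-1| <= 2 * d / `|a| ^+ 2.
Proof.
move=> a0 ua da; have a_gt0 : 0 < `|a| by rewrite normr_gt0.
have u_ge : `|a| / 2 <= `|u|.
  by have := ler_normD (a - u) u; rewrite subrK distrC; lra.
have u0 : u != 0 by rewrite -normr_gt0 (lt_le_trans _ u_ge) ?divr_gt0.
rewrite (_ : u^-1 - a^-1 = (a - u) / (u * a)); last by field; rewrite u0 a0.
rewrite normrM normfV normrM distrC ler_pdivrMr ?mulr_gt0 ?normr_gt0 //.
rewrite mulrAC ler_pdivlMr ?exprn_gt0 // expr2.
have d0 : 0 <= d := le_trans (normr_ge0 _) ua.
have := ler_wpM2r (mulr_ge0 (normr_ge0 a) (normr_ge0 a)) ua.
have : 0 <= d * `|a| * (`|u| - `|a| / 2).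
  by rewrite !mulr_ge0 ?normr_ge0 // subr_ge0.
nra.
Qed.

Lemma ler_natM_divD1 (C y : nat) : (0 < y)%N ->
  C%:R * (1 / ((C * y)%:R + 1)) <= 1 / y%:R :> T.
Proof.
move=> y0; have y_gt0 : 0 < y%:R :> T by rewrite ltr0n.
have z_gt0 : 0 < (C * y)%:R + 1 :> T by rewrite ltr_wpDl ?ler0n.
rewrite -subr_ge0 (_ : _ - _ = 1 / (y%:R * ((C * y)%:R + 1))).
  by rewrite divr_ge0 ?ltW ?mulr_gt0.
by rewrite natrM; field; rewrite -natrM !gt_eqF.
Qed.

End Approximation.

Section NatFrac.
Variable T : numFieldType.

Definition natfrac (p q h : nat) : T := (p%:R - q%:R) / (h%:R + 1).

Lemma natfrac_den_neq0 (h : nat) : h%:R + 1 != 0 :> T.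
Proof. by rewrite natr1 pnatr_eq0. Qed.

Lemma natfracN p q h : natfrac q p h = - natfrac p q h.
Proof. by rewrite /natfrac -mulNr opprB. Qed.

Lemma natfrac_den_mul (h h' : nat) :
  (h * h' + h + h')%N%:R + 1 = (h%:R + 1) * (h'%:R + 1) :> T.
Proof. by rewrite !natrD natrM; ring. Qed.

Lemma natfracD p q h p' q' h' :
  natfrac p q h + natfrac p' q' h' =
  natfrac (p * (h' + 1) + p' * (h + 1)) (q * (h' + 1) + q' * (h + 1))
          (h * h' + h + h').
Proof.
rewrite /natfrac natfrac_den_mul !natrD !natrM.
by field; rewrite !natfrac_den_neq0.
Qed.

Lemma natfracM p q h p' q' h' :
  natfrac p q h * natfrac p' q' h' =
  natfrac (p * p' + q * q') (p * q' + q * p') (h * h' + h + h').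
Proof.
rewrite /natfrac natfrac_den_mul !natrD !natrM.
by field; rewrite !natfrac_den_neq0.
Qed.

(* [1 - (1 - n)] is the 0/1 sign of [n] and [p - q + (q - p)] is [|p - q|]. *)
Lemma natfracV p q h :
  (natfrac p q h)^-1 =
  natfrac ((h + 1) * (1 - (1 - (p - q)))) ((h + 1) * (1 - (1 - (q - p))))
          (p - q + (q - p) - 1).
Proof.
rewrite /natfrac; wlog qp : p q / (q <= p)%N => [wlog|].
  have [/wlog//|/ltnW/wlog] := leqP q p.
  move=> E; apply: oppr_inj; rewrite -invrN -!mulNr !opprB E.
  by rewrite [(q - p + _)%N]addnC.
have [->|q_lt_p] := eqVneq p q.
  by rewrite subnn !muln0 !subrr !mul0r invr0.
have {}q_lt_p : (q < p)%N by rewrite ltn_neqAle eq_sym q_lt_p qp.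
rewrite (_ : q - p = 0)%N; last by apply/eqP; rewrite subn_eq0 ltnW.
rewrite (_ : 1 - (1 - (p - q)) = 1)%N; last by lia.
have -> : (p - q + 0 - 1)%N%:R + 1 = (p - q)%N%:R :> T.
  by rewrite natr1; congr _%:R; lia.
by rewrite muln1 muln0 subr0 natrB 1?ltnW // invf_div natrD.
Qed.

Lemma natfrac_gt0 p q h : (0 < natfrac p q h :> T) = (q < p)%N.
Proof.
rewrite /natfrac pmulr_lgt0; first by rewrite subr_gt0 ltr_nat.
by rewrite invr_gt0 ltr_wpDl ?ler0n.
Qed.

End NatFrac.
Arguments natfrac {T}.

Section ArchimedeanGrid.
Variable T : archiRealFieldType.

Lemma exists_nat_gt (x : T) : exists n : nat, x < n%:R.
Proof.
exists (Num.truncn `|x|).+1; apply: le_lt_trans (ler_norm x) _.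
by case/andP: (truncn_itv (normr_ge0 x)).
Qed.

Lemma grid_point_above (c s h : T) : c <= s -> 0 < h ->
  exists j : nat, s + h < c + j%:R * h <= s + 2 * h.
Proof.
move=> cs h0; have sc : 0 <= s - c by rewrite subr_ge0.
have /andP[tl tr] := truncn_itv (divr_ge0 sc (ltW h0)).
exists (Num.truncn ((s - c) / h)).+2.
rewrite -addn2 natrD; move: tl tr.
rewrite -(ler_pM2r h0) -(ltr_pM2r h0) divfK ?gt_eqF // -natr1.
by move=> tl tr; apply/andP; split; nra.
Qed.

Lemma rat_between (s eta : T) : 0 < eta ->
  exists a b e : nat, s - eta <= natfrac a b e < s.
Proof.
move=> eta0; have [e e_gt] := exists_nat_gt (2 / eta).
have e1 : 0 < e%:R + 1 :> T by rewrite ltr_wpDl ?ler0n.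
have [B B_gt] := exists_nat_gt (`|s| * (e%:R + 1)).
have w0 : 0 <= s * (e%:R + 1) + B%:R.
  by have := ler_wpM2r (ltW e1) (ler_norm (- s)); rewrite normrN; nra.
have /andP[tl tr] := truncn_itv w0.
exists (Num.truncn (s * (e%:R + 1) + B%:R)), B.+1, e.
rewrite ler_pdivlMr // ltr_pdivrMr // -natr1.
move: e_gt; rewrite ltr_pdivrMr // => e_gt.
by apply/andP; split; nra.
Qed.

End ArchimedeanGrid.

Section GridSearch.
Variable T : archiRealFieldType.
Variables (p : {poly T}) (s eta m : T) (k : nat).
Hypotheses (eta_gt0 : 0 < eta) (m_gt0 : 0 < m).
Hypothesis p_le0 : forall t, s - eta <= t <= s -> p.[t] <= 0.
Hypothesis p_ge : forall t, s <= t <= s + eta -> m * (t - s) ^+ k <= p.[t].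
Variables (c : T) (K M Z : nat).
Hypotheses (c_ge : s - eta <= c) (c_lt : c < s).
Hypotheses (K_gt : eta^-1 < K%:R) (M_gt : 2 ^+ k.+1 / m < M%:R).
Hypothesis Z_gt : 2 * (s - c) + 2 < Z%:R.

(* K makes the mesh 1 / (2 (x + K + 1)) at most eta / 2, M makes m times the
   k-th power of the mesh at least twice the threshold 1 / scale x, and Z
   bounds the range of the search. *)

Definition grid (x j : nat) : T := c + j%:R * (2 * (x + K).+1)%:R^-1.

Definition scale (x : nat) : nat := M * (x + K).+1 ^ k.

Variable e : nat -> nat -> T.
Hypothesis e_approx :
  forall x j, `|e x j - p.[grid x j]| <= 1 / ((2 * scale x)%:R + 1).

Lemma grid_ge x j : c <= grid x j.
Proof. by rewrite lerDl mulr_ge0 ?invr_ge0 ?ler0n. Qed.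

Lemma norm_grid_le x j : `|grid x j| <= `|c| + j%:R.
Proof.
have h1 : (2 * (x + K).+1)%:R^-1 <= 1 :> T by rewrite invf_le1 ?ltr0n // ler1n.
rewrite (le_trans (ler_normD _ _)) // lerD2l normrM ger0_norm ?ler0n //.
by rewrite ger0_norm ?invr_ge0 ?ler0n // -[X in _ <= X]mulr1 ler_wpM2l ?ler0n.
Qed.

Lemma scale_gt0 x : (0 < scale x)%N.
Proof.
rewrite muln_gt0 expn_gt0 /= andbT lt0n -(eqr_nat T).
by apply: contraTneq M_gt => ->; rewrite -leNgt divr_ge0 ?exprn_ge0 ?ler0n ?ltW.
Qed.

Lemma err_lt_half_threshold x :
  1 / ((2 * scale x)%:R + 1) < (scale x)%:R^-1 / 2 :> T.
Proof.
have S0 : 0 < (scale x)%:R :> T by rewrite ltr0n scale_gt0.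
have S2 : 0 < 2 * (scale x)%:R :> T by rewrite mulr_gt0.
have S21 : 0 < 2 * (scale x)%:R + 1 :> T by rewrite ltr_wpDl ?ltW.
rewrite natrM -invfM div1r ltf_pV2 ?posrE ?mulr_gt0 //.
by rewrite mulrC ltrDl.
Qed.

Lemma grid_gt_root x j : 0 < e x j - (scale x)%:R^-1 -> s < grid x j.
Proof.
move=> e_gt; rewrite ltNge; apply/negP => grid_le.
have p_grid : p.[grid x j] <= 0.
  by apply: p_le0; rewrite grid_le (le_trans c_ge (grid_ge _ _)).
have := e_approx x j; rewrite ler_norml => /andP[_].
have : 0 < (scale x)%:R^-1 :> T by rewrite invr_gt0 ltr0n scale_gt0.
have := err_lt_half_threshold x.
lra.
Qed.

Lemma threshold_le_gap x :
  2 * (scale x)%:R^-1 <= m * (2 * (x + K).+1)%:R^-1 ^+ k.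
Proof.
set X : T := (x + K).+1%:R; have X0 : 0 < X by rewrite ltr0n.
have M0 : 0 < M%:R :> T.
  by rewrite ltr0n; have := scale_gt0 x; rewrite muln_gt0 => /andP[].
rewrite /scale natrM natrX -/X natrM -/X.
have Q0 : 0 < (2 ^+ k * X ^+ k * M%:R)^-1 by rewrite invr_gt0 !mulr_gt0 ?exprn_gt0.
set Q := (2 ^+ k * X ^+ k * M%:R)^-1.
rewrite (_ : 2 * (M%:R * X ^+ k)^-1 = 2 ^+ k.+1 * Q); last first.
  by rewrite /Q exprS; field; rewrite ?mulf_neq0 ?expf_neq0 ?gt_eqF.
rewrite (_ : m * (2 * X)^-1 ^+ k = m * M%:R * Q); last first.
  by rewrite /Q exprVn exprMn; field; rewrite ?mulf_neq0 ?expf_neq0 ?gt_eqF.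
by rewrite ler_pM2r // -ler_pdivrMl // mulrC ltW.
Qed.

Lemma grid_witness x : exists2 j0, (j0 <= Z * (x + K).+1)%N &
  0 < e x j0 - (scale x)%:R^-1 /\
  forall j, (j <= j0)%N -> grid x j <= s + 1 / (x%:R + 1).
Proof.
set X : T := (x + K).+1%:R; pose h : T := (2 * (x + K).+1)%:R^-1.
have gridE j : grid x j = c + j%:R * h by [].
have hE : h = (2 * X)^-1 by rewrite /h natrM.
have ZX : (Z * (x + K).+1)%:R = Z%:R * X by rewrite natrM.
have X1 : 1 <= X by rewrite ler1n.
have X0 : 0 < X by rewrite ltr0n.
have X_eta : X^-1 <= eta.
  rewrite -[eta]invrK lef_pV2 ?posrE ?invr_gt0 //.
  by rewrite (ltW (lt_le_trans K_gt _)) // ler_nat addnC -addnS leq_addr.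
have X_prec : X^-1 <= 1 / (x%:R + 1).
  rewrite div1r lef_pV2 ?posrE ?ltr_wpDl ?ler0n //.
  by rewrite natr1 ler_nat ltnS leq_addr.
have gap_thr : 2 * (scale x)%:R^-1 <= m * h ^+ k := threshold_le_gap x.
clearbody h X.
have h0 : 0 < h by rewrite hE invr_gt0 mulr_gt0.
have h2 : 2 * h = X^-1 by rewrite hE invfM mulrA divff ?mul1r // pnatr_eq0.
have S0 : 0 < (scale x)%:R^-1 :> T by rewrite invr_gt0 ltr0n scale_gt0.
have [j0 /andP[above below]] := grid_point_above (ltW c_lt) h0.
rewrite -gridE in above below.
exists j0; last split.
- rewrite -(ler_nat T) ZX.
  have : j0%:R <= (s - c + 2 * h) * (2 * X).
    by rewrite -ler_pdivrMr ?mulr_gt0 // -hE; move: below; rewrite gridE; lra.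
  rewrite mulrDl h2 [X^-1 * _]mulrCA mulVf ?gt_eqF // mulr1.
  by have := ler_wpM2r (ltW X0) (ltW Z_gt); lra.
- have gap : m * h ^+ k <= p.[grid x j0].
    have j0_near : s <= grid x j0 <= s + eta by apply/andP; split; lra.
    apply: le_trans (p_ge j0_near).
    by rewrite ler_pM2l //; apply: lerXn2r; rewrite ?nnegrE; lra.
  have := e_approx x j0; rewrite ler_norml => /andP[e_ge _].
  by have := err_lt_half_threshold x; lra.
- move=> j jj0; apply: le_trans (_ : grid x j0 <= _); last by lra.
  by rewrite !gridE lerD2l ler_wpM2r ?ler_nat // ltW.
Qed.

End GridSearch.

Lemma bounded_search_spec (P : pred nat) b :
  let m := find (fun j => P j || (j == b)) (iota 0 b.+1) in
  [/\ (m <= b)%N, P m || (m == b) & forall i, (i < m)%N -> ~~ P i].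
Proof.
move=> m; have hasb : has (fun j => P j || (j == b)) (iota 0 b.+1).
  by apply/hasP; exists b; rewrite ?mem_iota ?eqxx ?orbT // add0n leqnn.
have mb : (m < b.+1)%N by rewrite -[X in (_ < X)%N](size_iota 0) -has_find.
split => //; first by have := nth_find 0%N hasb; rewrite nth_iota.
move=> i im; have := before_find 0%N im; rewrite nth_iota ?(ltn_trans im) //.
by case: (P i).
Qed.

Section FComputable.
Variable F : fclass.
Arguments F : clear implicits.
Hypothesis HF : standard_conditions F.
Hypothesis HM : closed_minimizer F.

Lemma F_ext n f g : F n f -> f =1 g -> F n g.
Proof. by move=> Ff /functional_extensionality <-. Qed.

Lemma F_comp m n (h : ('I_m -> nat) -> nat) (g : 'I_m -> ('I_n -> nat) -> nat) :
  F m h -> (forall i, F n (g i)) -> F n (fun x => h (fun i => g i x)).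
Proof. by case: HF => _ [_ [_ [_ [_ [_ H]]]]]; apply: H. Qed.

Lemma F_proj n (i : 'I_n) : F n (fun x => x i).
Proof. by case: HF => _ [_ [H _]]. Qed.

Lemma F_binop n (op : nat -> nat -> nat) f g :
  F 2 (fun y => op (y ord0) (y ord_max)) -> F n f -> F n g ->
  F n (fun x => op (f x) (g x)).
Proof.
move=> Fop Ff Fg; pose fg (i : 'I_2) := if i == ord0 then f else g.
apply: F_ext (F_comp Fop (_ : forall i, F n (fg i))) _ => [i|x //].
by rewrite /fg; case: (i == ord0).
Qed.

Lemma F_add n f g : F n f -> F n g -> F n (fun x => f x + g x)%N.
Proof. by apply: F_binop; case: HF => _ [_ [_ [H _]]]. Qed.

Lemma F_mul n f g : F n f -> F n g -> F n (fun x => f x * g x)%N.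
Proof. by apply: F_binop; case: HF => _ [_ [_ [_ [H _]]]]. Qed.

Lemma F_sub n f g : F n f -> F n g -> F n (fun x => f x - g x)%N.
Proof. by apply: F_binop; case: HF => _ [_ [_ [_ [_ [H _]]]]]. Qed.

Lemma F_const n c : F n.+1 (fun _ => c).
Proof.
have F1c : F 1 (fun _ => c).
  elim: c => [|c IH]; first by case: HF.
  have Fsucc : F 1 (fun x => (x ord0).+1) by case: HF => _ [].
  exact: (F_comp Fsucc (g := fun _ _ => c) (fun _ => IH)).
exact: (F_comp F1c (g := fun _ x => x ord0) (fun _ => F_proj _)).
Qed.

(* The second argument is the one the minimizer searches over. *)
Definition F2 (f : nat -> nat -> nat) := F 2 (fun x => f (x ord0) (x ord_max)).

Lemma F2_fst : F2 (fun x _ => x). Proof. exact: F_proj. Qed.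
Lemma F2_snd : F2 (fun _ j => j). Proof. exact: F_proj. Qed.
Lemma F2_const c : F2 (fun _ _ => c). Proof. exact: F_const. Qed.

Lemma F2_add f g : F2 f -> F2 g -> F2 (fun x j => f x j + g x j)%N.
Proof. exact: F_add. Qed.

Lemma F2_mul f g : F2 f -> F2 g -> F2 (fun x j => f x j * g x j)%N.
Proof. exact: F_mul. Qed.

Lemma F2_sub f g : F2 f -> F2 g -> F2 (fun x j => f x j - g x j)%N.
Proof. exact: F_sub. Qed.

Lemma F2_exp f k : F2 f -> F2 (fun x j => f x j ^ k)%N.
Proof.
move=> Ff; elim: k => [|k IH]; first exact: F2_const.
by apply: F_ext (F2_mul Ff IH) _ => x; rewrite expnS.
Qed.

Lemma F2_subst g a b : F2 g -> F2 a -> F2 b -> F2 (fun x j => g (a x j) (b x j)).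
Proof. exact: F_binop. Qed.

Lemma F2_search f : F2 f ->
  F2 (fun x b => find (fun j => (f x j == 0)%N || (j == b)) (iota 0 b.+1)).
Proof. exact: HM. Qed.

Lemma F2_succ f : F2 f -> F2 (fun x j => (f x j).+1).
Proof. by move=> Ff; apply: F_ext (F2_add Ff (F2_const 1)) _ => x; rewrite addn1. Qed.

Definition Frat2 (r : nat -> nat -> R) := exists f g h,
  [/\ F2 f, F2 g, F2 h & forall x j, r x j = natfrac (f x j) (g x j) (h x j)].

Lemma Frat2_nat u : F2 u -> Frat2 (fun x j => (u x j)%:R).
Proof.
move=> Fu; exists u, (fun _ _ => 0%N), (fun _ _ => 0%N).
by split => //; try exact: F2_const; move=> x j; rewrite /natfrac subr0 add0r divr1.
Qed.

Lemma Frat2_const p q h : Frat2 (fun _ _ => natfrac p q h).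
Proof.
by exists (fun _ _ => p), (fun _ _ => q), (fun _ _ => h); split; try exact: F2_const.
Qed.

Lemma Frat2_subst r a b : Frat2 r -> F2 a -> F2 b ->
  Frat2 (fun x j => r (a x j) (b x j)).
Proof.
move=> [f [g [h [Ff Fg Fh E]]]] Fa Fb.
exists (fun x j => f (a x j) (b x j)), (fun x j => g (a x j) (b x j)),
  (fun x j => h (a x j) (b x j)); split => //; exact: F2_subst.
Qed.

Lemma Frat2_opp r : Frat2 r -> Frat2 (fun x j => - r x j).
Proof.
move=> [f [g [h [Ff Fg Fh E]]]]; exists g, f, h; split => // x j.
by rewrite E -natfracN.
Qed.

Lemma Frat2_add r s : Frat2 r -> Frat2 s -> Frat2 (fun x j => r x j + s x j).
Proof.
move=> [f [g [h [Ff Fg Fh E]]]] [f' [g' [h' [Ff' Fg' Fh' E']]]].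
have Fh1 := F2_add Fh (F2_const 1); have Fh1' := F2_add Fh' (F2_const 1).
eexists _, _, _; split; last by move=> x j; rewrite E E' natfracD.
all: by repeat apply: F2_add => //; apply: F2_mul.
Qed.

Lemma Frat2_sub r s : Frat2 r -> Frat2 s -> Frat2 (fun x j => r x j - s x j).
Proof. by move=> Fr /Frat2_opp; apply: Frat2_add. Qed.

Lemma Frat2_mul r s : Frat2 r -> Frat2 s -> Frat2 (fun x j => r x j * s x j).
Proof.
move=> [f [g [h [Ff Fg Fh E]]]] [f' [g' [h' [Ff' Fg' Fh' E']]]].
eexists _, _, _; split; last by move=> x j; rewrite E E' natfracM.
all: by repeat apply: F2_add => //; apply: F2_mul.
Qed.

Lemma Frat2_inv r : Frat2 r -> Frat2 (fun x j => (r x j)^-1).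
Proof.
move=> [f [g [h [Ff Fg Fh E]]]].
have F1 := F2_const 1; have Fh1 := F2_add Fh F1.
eexists _, _, _; split; last by move=> x j; rewrite E natfracV.
all: by repeat (apply: F2_mul || apply: F2_add || apply: F2_sub).
Qed.

Lemma Frat2_pos_test r : Frat2 r ->
  exists2 t, F2 t & forall x j, (t x j == 0)%N = (0 < r x j).
Proof.
move=> [f [g [h [Ff Fg Fh E]]]]; exists (fun x j => g x j + 1 - f x j)%N.
  by apply: F2_sub => //; apply: F2_add => //; exact: F2_const.
by move=> x j; rewrite E natfrac_gt0 subn_eq0 addn1.
Qed.

Lemma F_computable_approx (a : R) : F_computable F a ->
  forall N, F2 N -> exists2 r, Frat2 r &
    forall x j, `|r x j - a| <= 1 / ((N x j)%:R + 1).
Proof.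
move=> [f [g [h [Ff Fg Fh Ha]]]] N FN.
have F2un u : F 1 u -> F2 (fun x j => un u (N x j)).
  by move=> Fu; apply: (F_comp Fu (g := fun _ y => N (y ord0) (y ord_max))).
exists (fun x j => Fseq f g h (N x j)); last by move=> x j; apply: Ha.
exists (fun x j => un f (N x j)), (fun x j => un g (N x j)), (fun x j => un h (N x j)).
by split; try exact: F2un.
Qed.

Lemma Frat2_computable (a : R) r : Frat2 r ->
  (forall x, `|r x 0%N - a| <= 1 / (x%:R + 1)) -> F_computable F a.
Proof.
move=> [f [g [h [Ff Fg Fh E]]]] Ha.
have F1 u : F2 u -> F 1 (fun y => u (y ord0) 0%N).
  by move=> Fu; apply: (F_binop Fu (F_proj ord0) (F_const 0 0)).
exists (fun y => f (y ord0) 0%N), (fun y => g (y ord0) 0%N), (fun y => h (y ord0) 0%N).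
by split; try exact: F1; move=> x; have := Ha x; rewrite E.
Qed.

Lemma F_computable_nat (n : nat) : F_computable F n%:R.
Proof.
apply: (Frat2_computable (Frat2_nat (F2_const n))) => x.
by rewrite subrr normr0 divr_ge0 ?ler01 ?addr_ge0 ?ler0n.
Qed.

Lemma F_computableN (a : R) : F_computable F a -> F_computable F (- a).
Proof.
move=> /F_computable_approx/(_ _ F2_fst)[r Fr ra].
by apply: (Frat2_computable (Frat2_opp Fr)) => x; rewrite -opprD normrN.
Qed.

Lemma F_computableD (a b : R) :
  F_computable F a -> F_computable F b -> F_computable F (a + b).
Proof.
have FN : F2 (fun x _ => x.*2.+1).
  apply: F2_succ; apply: F_ext (F2_add F2_fst F2_fst) _ => x.
  by rewrite addnn.
move=> /F_computable_approx/(_ _ FN)[r Fr ra] /F_computable_approx/(_ _ FN)[s Fs sb].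
apply: (Frat2_computable (Frat2_add Fr Fs)) => x.
rewrite opprD addrACA (le_trans (ler_normD _ _)) //.
have -> : 1 / (x%:R + 1) = 1 / ((x.*2.+1)%:R + 1) + 1 / ((x.*2.+1)%:R + 1) :> R.
  rewrite -natr1 -muln2 natrM (_ : x%:R * 2 + 1 + 1 = 2 * (x%:R + 1)); last by ring.
  by field; rewrite natr1 pnatr_eq0.
exact: lerD (ra x 0%N) (sb x 0%N).
Qed.

Lemma F_computableM (a b : R) :
  F_computable F a -> F_computable F b -> F_computable F (a * b).
Proof.
move=> Fa Fb; have [C C_gt] := exists_nat_gt (`|a| + `|b| + 1).
have FN : F2 (fun x _ => C * x.+1)%N.
  by apply: F2_mul; [exact: F2_const | apply: F2_succ; exact: F2_fst].
have [r Fr ra] := F_computable_approx Fa FN.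
have [s Fs sb] := F_computable_approx Fb FN.
apply: (Frat2_computable (Frat2_mul Fr Fs)) => x.
pose d : R := 1 / ((C * x.+1)%:R + 1); have d1 : d <= 1.
  by rewrite /d ler_pdivrMr ?mul1r ?lerDr ?ler0n // ltr_wpDl ?ler0n.
apply: le_trans (approx_mul (ra x 0%N) (sb x 0%N) d1) _.
rewrite [x%:R + 1]natr1; apply: le_trans (ler_natM_divD1 R C (ltn0Sn x)).
by rewrite ler_wpM2r ?divr_ge0 ?ler01 ?addr_ge0 ?ler0n // ltW.
Qed.

Lemma F_computableV (a : R) : F_computable F a -> a != 0 -> F_computable F a^-1.
Proof.
move=> Fa a0; have A0 : 0 < `|a| by rewrite normr_gt0.
have [C C_gt] := exists_nat_gt (2 / `|a| + 2 / `|a| ^+ 2).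
have FN : F2 (fun x _ => C * x.+1)%N.
  by apply: F2_mul; [exact: F2_const | apply: F2_succ; exact: F2_fst].
have [r Fr ra] := F_computable_approx Fa FN.
apply: (Frat2_computable (Frat2_inv Fr)) => x.
pose d : R := 1 / ((C * x.+1)%:R + 1).
have d0 : 0 <= d by rewrite /d divr_ge0 ?ler01 ?addr_ge0 ?ler0n.
have Cd : C%:R * d <= 1 / (x%:R + 1).
  by rewrite [x%:R + 1]natr1; exact: ler_natM_divD1.
have e1 : 1 / (x%:R + 1) <= 1 :> R.
  by rewrite ler_pdivrMr ?mul1r ?lerDr ?ler0n // ltr_wpDl ?ler0n.
have A1 : 0 <= 2 / `|a| by rewrite divr_ge0 ?ltW.
have A2 : 0 <= 2 / `|a| ^+ 2 by rewrite divr_ge0 ?exprn_ge0 ?ltW.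
have dA : 2 * d <= `|a|.
  have : 2 / `|a| * d <= 1.
    by have := ler_wpM2r d0 (ltW C_gt); have := mulr_ge0 A2 d0; lra.
  by rewrite mulrAC ler_pdivrMr // mul1r.
apply: le_trans (approx_inv a0 (ra x 0%N) dA) _.
rewrite mulrAC; apply: le_trans Cd; apply: ler_wpM2r => //; lra.
Qed.

Lemma Frat2_horner (p : {poly R}) t T :
  (forall i, F_computable F p`_i) -> Frat2 t -> F2 T ->
  (forall x j, `|t x j| <= (T x j)%:R) ->
  forall N, F2 N -> exists2 e, Frat2 e &
    forall x j, `|e x j - p.[t x j]| <= 1 / ((N x j)%:R + 1).
Proof.
move=> + Ft FT tT; elim/poly_ind: p => [_ N FN|p c IH Fpc N FN].
  exists (fun _ _ => 0%:R); first exact/Frat2_nat/F2_const.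
  by move=> x j; rewrite horner0 subrr normr0 divr_ge0 ?ler01 ?addr_ge0 ?ler0n.
have Fp i : F_computable F p`_i.
  by have := Fpc i.+1; rewrite coefD coefMX coefC /= addr0.
have Fc : F_computable F c by have := Fpc 0%N; rewrite coefD coefMX coefC /= add0r.
have FD : F2 (fun x j => 2 * (N x j).+1)%N.
  by apply: F2_mul; [exact: F2_const | exact: F2_succ].
have [e Fe eE] := IH Fp _ (F2_mul FT FD).
have [r Fr rE] := F_computable_approx Fc FD.
exists (fun x j => e x j * t x j + r x j); first exact: Frat2_add (Frat2_mul Fe Ft) Fr.
move=> x j; rewrite hornerMXaddC opprD addrACA -mulrBl.
apply: le_trans (ler_normD _ _) _; rewrite normrM.
have D0 : (0 < 2 * (N x j).+1)%N by [].
have e_le := ler_natM_divD1 R (T x j) D0.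
have r_le := ler_natM_divD1 R 1 D0; rewrite mul1n mul1r in r_le.
have -> : 1 / ((N x j)%:R + 1) =
          1 / (2 * (N x j).+1)%:R + 1 / (2 * (N x j).+1)%:R :> R.
  by rewrite natrM natr1; field; rewrite addrC natr1 pnatr_eq0.
apply: lerD; last exact: le_trans (rE x j) r_le.
apply: le_trans e_le; rewrite [X in _ <= X]mulrC.
exact: ler_pM (normr_ge0 _) (normr_ge0 _) (eE x j) (tT x j).
Qed.

Lemma F_computable_search (s : R) t r J :
  Frat2 t -> Frat2 r -> F2 (fun x _ => J x) ->
  (forall x j, 0 < r x j -> s < t x j) ->
  (forall x, exists2 j0, (j0 <= J x)%N &
     0 < r x j0 /\ forall j, (j <= j0)%N -> t x j <= s + 1 / (x%:R + 1)) ->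
  F_computable F s.
Proof.
move=> Ft Fr FJ above witness; have [z Fz zE] := Frat2_pos_test Fr.
pose mu x := find (fun j => (z x j == 0)%N || (j == J x)) (iota 0 (J x).+1).
have Fmu : F2 (fun x _ => mu x) := F2_subst (F2_search Fz) F2_fst FJ.
apply: (Frat2_computable (Frat2_subst Ft F2_fst Fmu)) => x.
have [j0 j0J [r0 below]] := witness x.
have [_ mu_stop mu_first] := bounded_search_spec (fun j => z x j == 0)%N (J x).
have mu_j0 : (mu x <= j0)%N.
  by rewrite leqNgt; apply/negP => /mu_first; rewrite zE r0.
have r_mu : 0 < r x (mu x).
  rewrite -zE; case/orP: mu_stop => // /eqP mu_J.
  by rewrite (_ : mu x = j0) ?zE //; apply/eqP; rewrite eqn_leq mu_j0 /mu mu_J.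
have := above _ _ r_mu; have := below _ mu_j0.
by move=> ? ?; rewrite ger0_norm; lra.
Qed.

Lemma F_computable_root (p : {poly R}) s eta m k :
  (forall i, F_computable F p`_i) -> 0 < eta -> 0 < m ->
  (forall t, s - eta <= t <= s -> p.[t] <= 0) ->
  (forall t, s <= t <= s + eta -> m * (t - s) ^+ k <= p.[t]) ->
  F_computable F s.
Proof.
move=> Fp eta0 m0 p_le0 p_ge.
have [a [b [d /andP[c_ge c_lt]]]] := rat_between s eta0.
set c := natfrac a b d in c_ge c_lt.
have [K K_gt] := exists_nat_gt eta^-1.
have [M M_gt] := exists_nat_gt (2 ^+ k.+1 / m).
have [Z Z_gt] := exists_nat_gt (2 * (s - c) + 2).
have [B B_gt] := exists_nat_gt `|c|.
have FX : F2 (fun x _ => (x + K).+1).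
  by apply/F2_succ/F2_add; [exact: F2_fst | exact: F2_const].
have Fgrid : Frat2 (grid c K).
  apply: Frat2_add (Frat2_const a b d) (Frat2_mul (Frat2_nat F2_snd) _).
  by apply/Frat2_inv/Frat2_nat/F2_mul; [exact: F2_const | exact: FX].
have grid_le x j : `|grid c K x j| <= (B + j)%:R.
  by rewrite natrD (le_trans (norm_grid_le _ _ _ _)) // lerD2r ltW.
have Fscale : F2 (fun x _ => scale k K M x).
  by apply: F2_mul; [exact: F2_const | exact: F2_exp].
have [e Fe e_approx] := Frat2_horner Fp Fgrid (T := fun _ j => B + j)%N
  (F2_add (F2_const B) F2_snd) grid_le _ (F2_mul (F2_const 2) Fscale).
apply: (F_computable_search Fgrid (Frat2_sub Fe (Frat2_inv (Frat2_nat Fscale)))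
  (J := fun x => Z * (x + K).+1)%N).
- by apply: F2_mul; [exact: F2_const | exact: FX].
- exact (grid_gt_root m0 p_le0 c_ge M_gt e_approx).
- exact (grid_witness eta0 m0 p_ge c_lt K_gt M_gt Z_gt e_approx).
Qed.

Lemma F_computable_ivt (p : {poly R}) a b :
  (forall i, F_computable F p`_i) -> F_computable F a -> F_computable F b ->
  a <= b -> p.[a] <= 0 <= p.[b] ->
  exists x, [/\ F_computable F x, a <= x <= b & root p x].
Proof.
move=> Fp Fa Fb ab /andP[pa pb].
have [pa0|pa0] := eqVneq p.[a] 0; first by exists a; rewrite lexx ab /root pa0.
have [pb0|pb0] := eqVneq p.[b] 0; first by exists b; rewrite lexx ab /root pb0.
have {pa0 pa} pa : p.[a] < 0 by rewrite lt_neqAle pa0 pa.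
have {pb0 pb} pb : 0 < p.[b] by rewrite lt_neqAle eq_sym pb0 pb.
have {ab} ab : a < b.
  by rewrite lt_neqAle ab andbT; apply: contraTneq pb => <-; rewrite -leNgt ltW.
have [s [q [k [/andP[a_s sb] pE ok qs]]]] := poly_ivt_odd_root ab pa pb.
have [eta [m [eta0 m0 p_le0 p_ge]]] := sign_change_root_bounds pE ok qs.
exists s; split; first exact (F_computable_root Fp eta0 m0 p_le0 p_ge).
  by rewrite !ltW.
by rewrite /root pE horner_mulXsubC_exp subrr expr0n eqn0Ngt odd_gt0 // mulr0.
Qed.

End FComputable.

Theorem mainTheorem14 (F : fclass) :
  standard_conditions F -> closed_minimizer F ->
  real_closed_subfield (F_computable F).
Proof.
move=> HF HM; split; first exact: (F_computable_nat HF 0).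
split; first exact: (F_computable_nat HF 1).
split; first exact: F_computableD.
split; first exact: F_computableN.
split; first exact: F_computableM.
split; first exact: F_computableV.
by move=> p a b; apply: F_computable_ivt.
Qed.
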